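(* Let $V=\mathbb{F}_2^s$ and let $\circ$ and $\diamond$ be two alternative operations on $V$ with $\dim W_\circ=\dim W_\diamond=s-3$, with translation groups $T_\circ$ and $T_\diamond$. Then there exists $g\in\mathrm{GL}(V)$ such that $T_\diamond=T_\circ^g$ if and only if $\dim U_\circ=\dim U_\diamond$.
   Context: An alternative operation on $V$ is defined from an elementary abelian $2$-subgroup $T<\mathrm{AGL}(V,+)$ acting regularly on $V$: with $\tau_a$ the unique element of $T$ sending $0$ to $a$ (postfix notation), $a\circ b:=a\tau_b$, and $T_\circ:=T$. It is assumed that the xor-translations $x\mapsto x+a$ lie in the normaliser of $T$ in $\mathrm{Sym}(V)$. The weak key space is $W_\circ=\{k: x\circ k=x+k\ \forall x\}$; the product is $a\cdot b=a+b+a\circ b$ and the error space is $U_\circ=\{a\cdot b: a,b\in V\}$. For $g\in\mathrm{GL}(V)$, $T^g:=gTg^{-1}$. *)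

From HB Require Import structures.
From mathcomp Require Import all_boot all_order all_algebra all_fingroup.
Set Implicit Arguments. Unset Strict Implicit. Unset Printing Implicit Defensive.
Import GRing.Theory.
Local Open Scope ring_scope.

(* V = F_2^s, realised as row vectors; linear maps act on the right (postfix):
   x |-> x *m A. *)
Notation vec s := 'rV['F_2]_s.

Section Defs.
Variable s : nat.
Implicit Types (T : {set {perm vec s}}) (t : {perm vec s}).

Lemma xor_inj (a : vec s) : injective (fun x : vec s => x + a).
Proof. by move=> x y /addIr. Qed.

Definition xort (a : vec s) : {perm vec s} := perm (@xor_inj a).

Definition affine t : Prop :=
  exists2 A : 'M['F_2]_s, A \in unitmx & exists b : vec s, forall x, t x = x *m A + b.

Definition regular T : Prop :=
  forall x y : vec s, exists! t, t \in T /\ t x = y.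

Definition alt_trans (T : {group {perm vec s}}) : Prop :=
  [/\ (forall t, t \in T -> affine t),
      abelian T, (forall t, t \in T -> (t ^+ 2)%g = 1%g),
      regular T &
      (forall a : vec s, xort a \in ('N(T))%g)].

Definition tau T (b : vec s) : {perm vec s} :=
  odflt 1%g [pick t in T | t 0 == b].

Definition circ T (a b : vec s) : vec s := tau T b a.

Definition Wsp T : {set vec s} := [set k | [forall x, circ T x k == x + k]].

Definition dotp T (a b : vec s) : vec s := a + b + circ T a b.

Definition Usp T : {set vec s} := [set dotp T ab.1 ab.2 | ab : vec s * vec s].

Definition dimsp (A : {set vec s}) : nat := \dim <<enum A>>%VS.

(* T^g = g T g^{-1} in postfix notation: x (g t g^{-1}) = ((x g) t) g^{-1} *)
Definition conjT (g : 'M['F_2]_s) T : {set {perm vec s}} :=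
  [set p : {perm vec s} |
     [exists t in T, [forall x, p x == t (x *m g) *m invmx g]]].

End Defs.

From HB Require Import structures.
From mathcomp Require Import all_boot all_order all_algebra all_fingroup.
From mathcomp Require Import ring.
Set Implicit Arguments. Unset Strict Implicit. Unset Printing Implicit Defensive.
Import GRing.Theory.
Local Open Scope ring_scope.

(* The product a.b = a + b + a o b is bilinear, symmetric and alternating, and
   every product lies in its radical W; these identities come from T being an
   abelian group of exponent 2 normalised by the xor-translations.
   T_d = T_o^g says exactly that g is an isometry, (x g).(y g) = (x.y) g, so
   dim U is invariant. Conversely, when dim V/W = 3 the product induces a
   nondegenerate alternating map on V/W with values spanning U; choosing y, z, w
   spanning V modulo W with either y.z = 0 or y.w, z.w, y.z independent gives a
   basis y, z, w, y.w, z.w, [y.z], (complement of U in W) whose multiplication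
   table depends only on dim U, and the linear map matching two such bases is
   the required g. *)

Lemma addvv s (v : vec s) : v + v = 0.
Proof. by apply/rowP => j; rewrite !mxE addrr_pchar2 // pchar_Fp. Qed.

Lemma oppv s (v : vec s) : - v = v.
Proof. by rewrite -[LHS]addr0 -(addvv v) addKr. Qed.

Lemma addvK s (u v : vec s) : u + (u + v) = v.
Proof. by rewrite addrA addvv add0r. Qed.

Lemma addv_eq0 s (u v : vec s) : (u + v == 0) = (u == v).
Proof. by rewrite -{1}(oppv v) subr_eq0. Qed.

Lemma F2_cases (c : 'F_2) : c = 0 \/ c = 1.
Proof. by case: c => -[|[|[]]] // ?; [left|right]; apply: val_inj. Qed.

Lemma span_ind s (X : seq (vec s)) (P : vec s -> Prop) :
  P 0 -> (forall a b, P a -> P b -> P (a + b)) -> {in X, forall x, P x} ->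
  forall v, v \in <<X>>%VS -> P v.
Proof.
move=> P0 PD PX v; rewrite -[X]/(in_tuple X : seq _) => /coord_span ->.
apply: big_ind => // i _.
have [->|->] := F2_cases (coord (in_tuple X) i v); first by rewrite scale0r.
by rewrite scale1r; apply/PX/mem_nth.
Qed.

Lemma memv_line_F2 s (a b : vec s) : a \in <[b]>%VS -> a = 0 \/ a = b.
Proof.
case/vlineP => k ->; have [->|->] := F2_cases k; first by left; rewrite scale0r.
by right; rewrite scale1r.
Qed.

Lemma free2_F2 s (a b : vec s) : a != 0 -> b != 0 -> a != b -> free [:: a; b].
Proof.
move=> a0 b0 ab; rewrite free_cons seq1_free b0 andbT span_seq1.
by apply/negP => /memv_line_F2 [] /eqP; apply/negP.
Qed.

Lemma free3_F2 s (a b c : vec s) : a != 0 -> b != 0 -> c != 0 ->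
  a != b -> a != c -> b != c -> a + b + c != 0 -> free [:: a; b; c].
Proof.
move=> a0 b0 c0 ab ac bc abc; rewrite free_cons free2_F2 // andbT span_cons span_seq1.
apply/negP => /memv_addP [u /memv_line_F2 hu [v /memv_line_F2 hv]].
case: hu hv => -> [] ->; rewrite ?add0r ?addr0 => ea.
- by move/eqP: a0.
- by move/eqP: ac.
- by move/eqP: ab.
- by move/eqP: abc; rewrite ea -addrA addvv.
Qed.

Lemma xortE s (c x : vec s) : xort c x = x + c.
Proof. by rewrite permE. Qed.

Lemma xortVE s (c x : vec s) : (xort c)^-1%g x = x + c.
Proof.
have {1}-> : x = xort c (x + c) by rewrite xortE -addrA addvv addr0.
by rewrite permK.
Qed.

Section Translations.

Variables (s : nat) (T : {group {perm vec s}}).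
Hypothesis HT : alt_trans T.

Lemma tauP b : tau T b \in T /\ tau T b 0 = b.
Proof.
case: HT => _ _ _ reg _; rewrite /tau; case: pickP => [t /andP[tT /eqP]|none] //=.
have [t [[tT t0] _]] := reg 0 b.
by move: (none t); rewrite tT t0 eqxx.
Qed.

Lemma tau_of_mem t : t \in T -> tau T (t 0) = t.
Proof.
move=> tT; have [tauT tau0] := tauP (t 0).
case: HT => _ _ _ reg _; have [u [_ uniq_u]] := reg 0 (t 0).
by rewrite -(uniq_u _ (conj tauT tau0)) (uniq_u t).
Qed.

Lemma tauE b x : tau T b x = x + b + dotp T x b.
Proof. by rewrite /dotp /circ addvK. Qed.

Lemma dotp_linear b : exists M : 'M['F_2]_s, forall x, dotp T x b = x *m M.
Proof.
have [tT t0] := tauP b; case: HT => aff _ _ _ _.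
have [A _ [c tE]] := aff _ tT.
have cb : c = b by rewrite -t0 tE mul0mx add0r.
subst c; exists (A + 1%:M) => x.
by rewrite /dotp /circ tE mulmxDr mulmx1 addrACA addvv addr0 addrC.
Qed.

Lemma dotpDl x y b : dotp T (x + y) b = dotp T x b + dotp T y b.
Proof. by have [M dM] := dotp_linear b; rewrite !dM mulmxDl. Qed.

Lemma dotp0l b : dotp T 0 b = 0.
Proof. by have [M dM] := dotp_linear b; rewrite dM mul0mx. Qed.

Lemma dotpC a b : dotp T a b = dotp T b a.
Proof.
have [taT ta0] := tauP a; have [tbT tb0] := tauP b.
case: HT => _ /centsP cTT _ _ _.
have := congr1 (fun p : {perm vec s} => p 0) (cTT _ taT _ tbT).
by rewrite /= !permM ta0 tb0 /dotp /circ => ->; rewrite [a + b]addrC.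
Qed.

Lemma dotpvv b : dotp T b b = 0.
Proof.
have [tbT tb0] := tauP b; case: HT => _ _ sqr1 _ _.
have := congr1 (fun p : {perm vec s} => p 0) (sqr1 _ tbT).
by rewrite /= expgS expg1 permM perm1 tb0 /dotp /circ => ->; rewrite addvv addr0.
Qed.

Lemma dotp_circ a b x :
  dotp T x (a + b + dotp T a b) = dotp T x a + dotp T x b + dotp T (dotp T x a) b.
Proof.
have [taT ta0] := tauP a; have tbT := (tauP b).1.
have := tau_of_mem (groupM taT tbT); rewrite permM ta0 tauE.
move=> /(congr1 (fun p : {perm vec s} => p x)); rewrite permM !tauE !dotpDl => E.
apply: (addrI (x + (a + b + dotp T a b))); rewrite E.
by apply/rowP => j; rewrite !mxE; ring.
Qed.

Lemma dotp_shift b c x : dotp T x (b + dotp T c b) = dotp T x b.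
Proof.
have tbT := (tauP b).1; case: HT => _ _ _ _ nT.
have tbJ y : (tau T b ^ xort c)%g y = tau T b (y + c) + c.
  by rewrite conjgE !permM xortVE xortE.
have := @tau_of_mem (tau T b ^ xort c)%g; rewrite memJ_norm ?nT // => /(_ tbT).
rewrite tbJ; have -> : tau T b (0 + c) + c = b + dotp T c b.
  by rewrite add0r tauE addrAC [c + b]addrC -[b + c + c]addrA addvv addr0.
move=> /(congr1 (fun p : {perm vec s} => p x)); rewrite tbJ !tauE !dotpDl => E.
apply: (addrI (x + (b + dotp T c b))); rewrite E.
by rewrite -[X in _ + X = _](oppv c); apply/rowP => j; rewrite !mxE; ring.
Qed.

Lemma dotp0r x : dotp T x 0 = 0.
Proof. by rewrite dotpC dotp0l. Qed.

Lemma dotpDr_circ a b x :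
  dotp T x (a + b) = dotp T x a + dotp T x b + dotp T (dotp T x a) b.
Proof.
have aab : dotp T a (a + b) = dotp T a b by rewrite dotpC dotpDl dotpvv add0r dotpC.
by rewrite -(dotp_shift (a + b) a) aab dotp_circ.
Qed.

Lemma dotp_prodr a b x : dotp T x (dotp T a b) = 0.
Proof.
have sq y : dotp T (dotp T y b) b = 0.
  by have := dotpDr_circ b b y; rewrite !addvv dotp0r add0r.
have shift y : dotp T y (dotp T a b) = dotp T (dotp T y b) (dotp T a b).
  apply/eqP; rewrite -addv_eq0; apply/eqP; apply: (addrI (dotp T y b)).
  by rewrite addr0 addrA -dotpDr_circ dotp_shift.
by rewrite shift shift sq dotp0l.
Qed.

Lemma dotp_prodl a b x : dotp T (dotp T a b) x = 0.
Proof. by rewrite dotpC dotp_prodr. Qed.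

Lemma dotpDr x a b : dotp T x (a + b) = dotp T x a + dotp T x b.
Proof. by rewrite dotpDr_circ dotp_prodl addr0. Qed.

Definition Wv : {vspace vec s} := <<enum (Wsp T)>>%VS.
Definition Uv : {vspace vec s} := <<enum (Usp T)>>%VS.

Lemma memWspP k : reflect (forall x, dotp T x k = 0) (k \in Wsp T).
Proof.
rewrite inE; apply: (iffP forallP) => [Wk x | Wk x].
  by apply/eqP; rewrite addv_eq0 eq_sym (eqP (Wk x)).
by rewrite eq_sym -addv_eq0 -/(dotp T x k) Wk.
Qed.

Lemma dotp_Wv a x : a \in Wv -> dotp T x a = 0.
Proof.
move: a; apply: span_ind => [|a b xa xb|k]; first exact: dotp0r.
  by rewrite dotpDr xa xb addr0.
by rewrite mem_enum => /memWspP.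
Qed.

Lemma ann_Wv a : (forall x, dotp T x a = 0) -> a \in Wv.
Proof. by move/memWspP => Wa; apply: memv_span; rewrite mem_enum. Qed.

Lemma dotp_Uv a b : dotp T a b \in Uv.
Proof. by apply: memv_span; rewrite mem_enum; apply/imsetP; exists (a, b). Qed.

Lemma Uv_sub_Wv : (Uv <= Wv)%VS.
Proof.
apply/span_subvP => u; rewrite mem_enum => /imsetP [[a b] _ ->].
by apply: ann_Wv => x; rewrite dotp_prodr.
Qed.

Definition spans_mod (X : seq (vec s)) := (fullv <= <<X>> + Wv)%VS.

Lemma spans_mod_ind X (P : vec s -> Prop) :
  spans_mod X -> P 0 -> (forall a b, P a -> P b -> P (a + b)) ->
  {in X, forall x, P x} -> {in Wv, forall a, P a} -> forall v, P v.
Proof.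
move=> sX P0 PD PX PW v; apply: (span_ind (X := X ++ enum (Wsp T))) => //.
  by move=> x; rewrite mem_cat => /orP [/PX | xW] //; apply/PW/memv_span.
by rewrite span_cat; apply: (subvP sX); apply: memvf.
Qed.

Lemma spans_mod_sub X Y : spans_mod X -> {subset X <= <<Y>> + Wv}%VS -> spans_mod Y.
Proof.
move=> sX /span_subvP XY; apply: (subv_trans sX).
by rewrite subv_add XY addvSr.
Qed.

Lemma dotp_span X (S : {vspace vec s}) : spans_mod X ->
  {in X &, forall a b, dotp T a b \in S} -> forall a b, dotp T a b \in S.
Proof.
move=> sX XS; apply: (@spans_mod_ind X (fun a => forall b, dotp T a b \in S) sX).
- by move=> b; rewrite dotp0l mem0v.
- by move=> a a' Sa Sa' b; rewrite dotpDl memvD.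
- move=> a Xa; apply: (@spans_mod_ind X (fun b => dotp T a b \in S) sX).
  + by rewrite dotp0r mem0v.
  + by move=> b b' Sb Sb'; rewrite dotpDr memvD.
  + by move=> b; apply: XS.
  + by move=> b /dotp_Wv ->; rewrite mem0v.
- by move=> a /dotp_Wv Wa b; rewrite dotpC Wa mem0v.
Qed.

Lemma ann_spans_mod X c : spans_mod X -> {in X, forall x, dotp T c x = 0} -> c \in Wv.
Proof.
move=> sX Xc; apply: ann_Wv.
apply: (@spans_mod_ind X (fun x => dotp T x c = 0) sX)
  => [|a b Ha Hb|x Xx|a /dotp_Wv Wa].
- exact: dotp0l.
- by rewrite dotpDl Ha Hb addr0.
- by rewrite dotpC Xc.
- by rewrite dotpC Wa.
Qed.

Lemma Uv_triple y z w : spans_mod [:: y; z; w] ->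
  Uv = <<[:: dotp T y w; dotp T z w; dotp T y z]>>%VS.
Proof.
move=> sX; apply/eqP; rewrite eqEsubv; apply/andP; split; last first.
  by apply/span_subvP => u; rewrite !inE => /or3P [] /eqP ->; apply: dotp_Uv.
apply/span_subvP => u; rewrite mem_enum => /imsetP [[a b] _ ->] /=.
apply: (dotp_span sX) => {a b} a b.
rewrite !inE => /or3P [] /eqP -> /or3P [] /eqP ->;
  rewrite ?dotpvv ?mem0v // ?[dotp T w _]dotpC ?[dotp T z y]dotpC;
  by apply: memv_span; rewrite !inE eqxx ?orbT.
Qed.

(* The basis y, z, w, y.w, z.w, [y.z,] followed by a basis of a complement of
   U in W: entry (i, k) gives the index of the product of basis vectors i and
   k, or None when that product is 0; r = dim U decides whether y.z is there. *)
Definition basis_table (r i k : nat) : option nat :=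
  match i, k with
  | 0, 2 | 2, 0 => Some 3
  | 1, 2 | 2, 1 => Some 4
  | 0, 1 | 1, 0 => if r == 3 then Some 5 else None
  | _, _ => None
  end.

Definition normal_basis (X : seq (vec s)) := [/\ size X = s, (fullv <= <<X>>)%VS &
  forall i k, dotp T X`_i X`_k = oapp (nth 0 X) 0 (basis_table (dimsp (Usp T)) i k)].

Section DimensionThree.

Hypothesis s_ge3 : (3 <= s)%N.
Hypothesis dimW : dimsp (Wsp T) = (s - 3)%N.

Lemma spans_mod_size X : spans_mod X -> (3 <= size X)%N.
Proof.
move=> /dimvS; rewrite dimvf /dim /= mul1n => sX.
have := leq_trans sX (dimv_add_leqif _ _); rewrite [\dim Wv]dimW.
rewrite -{1}(subnKC s_ge3) leq_add2r => /leq_trans; apply; exact: dim_span.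
Qed.

Lemma free_products2 y z w : spans_mod [:: y; z; w] -> dotp T y z = 0 ->
  free [:: dotp T y w; dotp T z w].
Proof.
move=> sX yz0.
have inX v X : v \in X -> v \in (<<X>> + Wv)%VS.
  by move=> Xv; apply: (subvP (addvSl _ _)); apply: memv_span.
have inW v X : v \in Wv -> v \in (<<X>> + Wv)%VS by apply: (subvP (addvSr _ _)).
have no_pair a b : y \in (<<[:: a; b]>> + Wv)%VS -> z \in (<<[:: a; b]>> + Wv)%VS ->
    w \in (<<[:: a; b]>> + Wv)%VS -> False.
  move=> ya za wa; have /spans_mod_size // : spans_mod [:: a; b].
  by apply: (spans_mod_sub sX) => v; rewrite !inE => /or3P [] /eqP ->.
apply: free2_F2; apply/eqP => e.
- have yW : y \in Wv.
    apply: (ann_spans_mod sX) => v.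
    by rewrite !inE => /or3P [] /eqP ->; rewrite ?dotpvv.
  by apply: (no_pair z w); [exact: inW | apply: inX; rewrite !inE eqxx ?orbT..].
- have zW : z \in Wv.
    apply: (ann_spans_mod sX) => v.
    by rewrite !inE => /or3P [] /eqP ->; rewrite ?dotpvv // dotpC.
  by apply: (no_pair y w); [|exact: inW|]; apply: inX; rewrite !inE eqxx ?orbT.
- have yzW : y + z \in Wv.
    apply: (ann_spans_mod sX) => v; rewrite !inE => /or3P [] /eqP ->;
      by rewrite dotpDl ?e ?addvv ?dotpvv ?yz0 ?add0r // dotpC.
  apply: (no_pair z w); try by apply: inX; rewrite !inE eqxx ?orbT.
  rewrite -(addvK z y) [z + y]addrC; apply: memv_add yzW.
  by apply: memv_span; rewrite inE eqxx.
Qed.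

Lemma spanning_triple : exists y z w, spans_mod [:: y; z; w].
Proof.
have dimC : \dim (Wv^C)%VS = 3.
  by rewrite dimv_compl dimvf /dim /= mul1n [\dim Wv]dimW subKn.
have [y [z [w eB]]] : exists y z w, vbasis (Wv^C)%VS = [:: y; z; w] :> seq _.
  have := size_tuple (vbasis (Wv^C)%VS); move: (tval _) => B; rewrite dimC.
  by case: B => [|y [|z [|w []]]] // _; exists y, z, w.
exists y, z, w.
by rewrite /spans_mod -eB (span_basis (vbasisP _)) addvC addv_complf.
Qed.

Definition adapted y z w := spans_mod [:: y; z; w] /\
  (dotp T y z = 0 \/ free [:: dotp T y w; dotp T z w; dotp T y z]).

Lemma exists_adapted : exists y z w, adapted y z w.
Proof.
have [x0 [x1 [x2 sX]]] := spanning_triple.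
have isotropic y z w : x0 \in <<[:: y; z; w]>>%VS -> x1 \in <<[:: y; z; w]>>%VS ->
    x2 \in <<[:: y; z; w]>>%VS -> dotp T y z = 0 -> exists y z w, adapted y z w.
  move=> h0 h1 h2 yz; exists y, z, w; split; last by left.
  by apply: (spans_mod_sub sX) => v; rewrite !inE => /or3P [] /eqP ->;
    apply: (subvP (addvSl _ _)).
have inl v X : v \in X -> v \in <<X>>%VS by apply: memv_span.
have inl2 u v X : u \in X -> v \in X -> u + v \in <<X>>%VS.
  by move=> uX vX; rewrite memvD ?inl.
(* Every bivector of a 3-space is decomposable, so a linear relation among the
   products of x0, x1, x2 exhibits two independent vectors with product 0: the
   seven cases below are the seven possible relations. *)
have [e|n02] := eqVneq (dotp T x0 x2) 0.
  by apply: (isotropic x0 x2 x1) => //; apply: inl; rewrite !inE eqxx ?orbT.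
have [e|n12] := eqVneq (dotp T x1 x2) 0.
  by apply: (isotropic x1 x2 x0) => //; apply: inl; rewrite !inE eqxx ?orbT.
have [e|n01] := eqVneq (dotp T x0 x1) 0.
  by apply: (isotropic x0 x1 x2) => //; apply: inl; rewrite !inE eqxx ?orbT.
have [e|n02_12] := eqVneq (dotp T x0 x2) (dotp T x1 x2).
  apply: (isotropic (x0 + x1) x2 x0); last by rewrite dotpDl e addvv.
  all: try by apply: inl; rewrite !inE eqxx ?orbT.
  by rewrite -[x1 in x1 \in _](addvK x0) inl2 ?inE ?eqxx ?orbT.
have [e|n02_01] := eqVneq (dotp T x0 x2) (dotp T x0 x1).
  apply: (isotropic x0 (x1 + x2) x1); last by rewrite dotpDr addrC e addvv.
  all: try by apply: inl; rewrite !inE eqxx ?orbT.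
  by rewrite -[x2 in x2 \in _](addvK x1) inl2 ?inE ?eqxx ?orbT.
have [e|n12_01] := eqVneq (dotp T x1 x2) (dotp T x0 x1).
  apply: (isotropic (x0 + x2) x1 x0); last by rewrite dotpDl (dotpC x2) -e addrC addvv.
  all: try by apply: inl; rewrite !inE eqxx ?orbT.
  by rewrite -[x2 in x2 \in _](addvK x0) inl2 ?inE ?eqxx ?orbT.
have [e|n_sum] := eqVneq (dotp T x0 x2 + dotp T x1 x2 + dotp T x0 x1) 0.
  have x1_in : x1 \in <<[:: x0 + x1; x1 + x2; x0]%R>>%VS.
    by rewrite -[x1 in x1 \in _](addvK x0) inl2 ?inE ?eqxx ?orbT.
  apply: (isotropic (x0 + x1) (x1 + x2) x0) => //.
  - by apply: inl; rewrite !inE eqxx ?orbT.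
  - by rewrite -[x2 in x2 \in _](addvK x1) memvD // inl ?inE ?eqxx ?orbT.
  rewrite !dotpDl !dotpDr dotpvv add0r -e.
  by apply/rowP => j; rewrite !mxE; ring.
exists x0, x1, x2; split=> //; right.
exact: free3_F2.
Qed.

Lemma normal_basis_of_triple y z w L :
  spans_mod [:: y; z; w] -> Uv = <<L>>%VS -> free L ->
  L = [:: dotp T y w; dotp T z w; dotp T y z] \/
    L = [:: dotp T y w; dotp T z w] /\ dotp T y z = 0 ->
  normal_basis ([:: y; z; w] ++ L ++ vbasis (Wv :\: Uv)).
Proof.
move=> sX UL /eqP dimL eL; set B := vbasis _.
have UW := Uv_sub_Wv.
have dimU : dimsp (Usp T) = size L by rewrite -dimL -UL.
have WB : {subset L ++ B <= Wv}.
  move=> v; rewrite mem_cat => /orP [Lv|/vbasis_mem Bv].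
    by apply: (subvP UW); rewrite UL memv_span.
  exact: (subvP (diffvSl _ _) _ Bv).
split.
- have := dimv_cap_compl Wv Uv; rewrite (capv_idPr UW) => dimWU.
  by rewrite !size_cat /= -dimU (size_tuple B) dimWU [\dim Wv]dimW subnKC.
- rewrite span_cat span_cat (span_basis (vbasisP _)) -UL [(Uv + _)%VS]addvC addv_diff.
  by rewrite (addv_idPl UW).
move=> i k; rewrite dimU.
have WX j : (L ++ B)`_j \in Wv.
  have [jLB|] := ltnP j (size (L ++ B)); first exact/WB/mem_nth.
  by move/(nth_default 0) ->; rewrite mem0v.
case: i => [|[|[|i]]]; last by rewrite /= dotpC dotp_Wv.
all: case: k => [|[|[|k]]];
  first [by rewrite /= dotp_Wv | by rewrite /= dotpvv | idtac].
all: by case: eL => [-> | [-> yz0]] /=; rewrite ?yz0 // dotpC ?yz0.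
Qed.

Lemma normal_basis_exists : exists X, normal_basis X.
Proof.
have [y [z [w [sX [yz0|free3]]]]] := exists_adapted; last first.
  by eexists; apply: normal_basis_of_triple sX (Uv_triple sX) free3 _; left.
eexists; apply: (normal_basis_of_triple sX _ (free_products2 sX yz0)); last by right.
by rewrite (Uv_triple sX) yz0 (span_cat [:: _; _] [:: 0]) span_seq1 addv0.
Qed.

End DimensionThree.

End Translations.

Lemma spanning_mx_unit s (X : seq (vec s)) : size X = s -> (fullv <= <<X>>)%VS ->
  \matrix_(j < s) X`_j \in unitmx.
Proof.
move=> sizeX fullX; rewrite -row_full_unit -sub1mx; apply/row_subP => i; apply/submxP.
pose tX := tcast sizeX (in_tuple X).
have /coord_span -> : row i 1%:M \in <<tX>>%VS.
  by rewrite val_tcast (subvP fullX) ?memvf.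
exists (\row_j coord tX j (row i 1%:M)); rewrite mulmx_sum_row.
by apply: eq_bigr => j _; rewrite rowK mxE val_tcast.
Qed.

Lemma change_of_basis s (X Y : seq (vec s)) :
  size X = s -> (fullv <= <<X>>)%VS -> size Y = s -> (fullv <= <<Y>>)%VS ->
  exists2 g : 'M['F_2]_s, g \in unitmx & forall j, X`_j *m g = Y`_j.
Proof.
move=> sizeX fullX sizeY fullY.
have EXu := spanning_mx_unit sizeX fullX; have EYu := spanning_mx_unit sizeY fullY.
exists (invmx (\matrix_(j < s) X`_j) *m \matrix_(j < s) Y`_j).
  by rewrite unitmx_mul unitmx_inv EXu EYu.
move=> j; have [js|sj] := ltnP j s; last by rewrite !nth_default ?sizeX ?sizeY ?mul0mx.
have nthE (Z : seq (vec s)) : Z`_j = row (Ordinal js) (\matrix_(j < s) Z`_j).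
  by rewrite rowK.
by rewrite (nthE X) (nthE Y) rowE mulmxA mulmxK // -rowE.
Qed.

Section Conjugation.

Variables (s : nat) (Tc Td : {group {perm vec s}}) (g : 'M['F_2]_s).
Hypotheses (HTc : alt_trans Tc) (HTd : alt_trans Td) (gU : g \in unitmx).

Definition dotp_isometry :=
  forall x y, dotp Tc (x *m g) (y *m g) = dotp Td x y *m g.

Lemma tau_isometry :
  dotp_isometry -> forall b x, tau Tc (b *m g) (x *m g) = tau Td b x *m g.
Proof. by move=> iso b x; rewrite !tauE iso !mulmxDl. Qed.

Lemma conjT_isometryP : (Td : {set _}) = conjT g Tc <-> dotp_isometry.
Proof.
split=> [eT x b | iso].
  have [tdT td0] := tauP HTd b.
  have : tau Td b \in conjT g Tc by rewrite -eT.
  rewrite inE => /existsP [t /andP [tT /forallP tE]].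
  have t0 : t 0 = b *m g by move/eqP: (tE 0); rewrite td0 mul0mx => ->; rewrite mulmxKV.
  move/eqP: (tE x); rewrite -(tau_of_mem HTc tT) t0 !tauE mulmxDl (mulmxDl (x *m g)).
  by rewrite !mulmxK // => /addrI ->; rewrite mulmxKV.
apply/setP => p; rewrite inE; apply/idP/existsP => [pT | [t /andP [tT /forallP pE]]].
  exists (tau Tc (p 0 *m g)); rewrite (tauP HTc _).1 /=.
  by apply/forallP => x; rewrite tau_isometry // mulmxK // (tau_of_mem HTd pT).
have -> : p = tau Td (t 0 *m invmx g).
  apply/permP => x; rewrite (eqP (pE x)); set b := t 0.
  by rewrite -(tau_of_mem HTc tT) -/b -{1}[b](mulmxKV gU) tau_isometry // mulmxK.
by case: (tauP HTd (t 0 *m invmx g)).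
Qed.

Lemma Usp_isometry : dotp_isometry -> Usp Tc = [set u *m g | u in Usp Td].
Proof.
move=> iso; apply/setP => v.
apply/imsetP/imsetP => [[[a b] _ ->]|[u /imsetP [[a b] _ ->] ->]] /=.
  exists (dotp Td (a *m invmx g) (b *m invmx g)); last by rewrite -iso !mulmxKV.
  by apply/imsetP; exists (a *m invmx g, b *m invmx g).
by exists (a *m g, b *m g); rewrite ?iso.
Qed.

End Conjugation.

Lemma dimsp_mx_img s (g : 'M['F_2]_s) (A : {set vec s}) :
  g \in unitmx -> dimsp [set u *m g | u in A] = dimsp A.
Proof.
move=> gU; pose f : 'Hom(vec s, vec s) := linfun (mulmxr g); rewrite /dimsp.
have -> : <<enum [set u *m g | u in A]>>%VS = <<[seq f u | u <- enum A]>>%VS.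
  apply: eq_span => v; rewrite mem_enum.
  apply/imsetP/mapP => [[u uA ->]|[u uA ->]]; exists u; rewrite ?mem_enum ?lfunE //.
  by move: uA; rewrite mem_enum.
rewrite -limg_span limg_dim_eq //.
have /eqP -> : lker f == 0%VS.
  by apply/lker0P => u v; rewrite !lfunE /=; apply: (can_inj (mulmxK gU)).
by rewrite capv0.
Qed.

Lemma normal_bases_isometry s (Tc Td : {group {perm vec s}}) (Xc Xd : seq (vec s)) :
  alt_trans Tc -> alt_trans Td -> normal_basis Tc Xc -> normal_basis Td Xd ->
  dimsp (Usp Tc) = dimsp (Usp Td) -> exists2 g, g \in unitmx & dotp_isometry Tc Td g.
Proof.
move=> HTc HTd [sizec fullc tabc] [sized fulld tabd] dU.
have [g gU XdXc] := change_of_basis sized fulld sizec fullc.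
exists g => //.
have onX i k : dotp Tc (Xd`_i *m g) (Xd`_k *m g) = dotp Td Xd`_i Xd`_k *m g.
  by rewrite !XdXc tabc tabd dU; case: basis_table => [j|] /=; rewrite ?XdXc ?mul0mx.
suff ext x : x \in <<Xd>>%VS -> forall y, y \in <<Xd>>%VS ->
    dotp Tc (x *m g) (y *m g) = dotp Td x y *m g.
  by move=> x y; apply: ext; rewrite (subvP fulld) ?memvf.
move: x; apply: span_ind => [y _|x x' Hx Hx' y yX|_ /(nthP 0) [i _ <-]].
- by rewrite mul0mx !dotp0l // mul0mx.
- by rewrite mulmxDl !dotpDl // mulmxDl Hx ?Hx'.
apply: span_ind => [|y y' Hy Hy'|_ /(nthP 0) [k _ <-]].
- by rewrite mul0mx !dotp0r // mul0mx.
- by rewrite mulmxDl !dotpDr // mulmxDl Hy Hy'.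
exact: onX.
Qed.

Theorem theorem7 (s : nat) (Tc Td : {group {perm vec s}}) :
  (3 <= s)%N ->
  alt_trans Tc -> alt_trans Td ->
  dimsp (Wsp Tc) = (s - 3)%N -> dimsp (Wsp Td) = (s - 3)%N ->
  (exists2 g : 'M['F_2]_s, g \in unitmx & (Td : {set {perm vec s}}) = conjT g Tc)
  <-> dimsp (Usp Tc) = dimsp (Usp Td).
Proof.
move=> s_ge3 HTc HTd dWc dWd; split=> [[g gU /(conjT_isometryP HTc HTd gU) iso] | dU].
  by rewrite (Usp_isometry gU iso) dimsp_mx_img.
have [Xc NXc] := normal_basis_exists HTc s_ge3 dWc.
have [Xd NXd] := normal_basis_exists HTd s_ge3 dWd.
have [g gU iso] := normal_bases_isometry HTc HTd NXc NXd dU.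
by exists g => //; apply/(conjT_isometryP HTc HTd gU).
Qed.
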